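(* Let $S$ be a $0$-left cancellative semigroup admitting least common multiples, and let $\pi$ be a representation of $S$ on a set $\Omega$ which respects least common multiples. Then the inverse subsemigroup $\mathcal I(\Omega,\pi)$ of $\mathcal I(\Omega)$ generated by $\{\pi_s:s\in S\}$ equals $$\{\pi_u f_\Lambda \pi_v^{-1} : \Lambda\subseteq\tilde S \text{ finite},\ \Lambda\cap S\neq\emptyset,\ u,v\in\Lambda\}.$$
   Context: $S$ is a semigroup with zero $0$; it is $0$-left cancellative if $st=sr\neq0$ implies $t=r$. Let $\tilde S=S\cup\{1\}$ where $1\notin S$ acts as an identity. For $s,t\in S$, $s$ divides $t$ ($s\mid t$) if $t\in s\tilde S$. An element $r\in S$ is a least common multiple of $s,t\in S$ if $sS\cap tS=rS$ and both $s\mid r$ and $t\mid r$; $S$ admits least common multiples if every pair of elements has one. $\mathcal I(\Omega)$ is the inverse semigroup of all partial bijections of $\Omega$. A representation of $S$ on $\Omega$ is a map $s\mapsto\pi_s\in\mathcal I(\Omega)$ with $\pi_0$ the empty map and $\pi_s\circ\pi_t=\pi_{st}$. Write $E_s$ for the range of $\pi_s$. $\pi$ respects least common multiples if $E_r=E_s\cap E_t$ whenever $r$ is a least common multiple of $s$ and $t$. Extend $\pi$ to $\tilde S$ by $\pi_1=\mathrm{id}_\Omega$. For $u\in\tilde S$ let $f_u=\pi_u^{-1}\pi_u$ (identity on the domain of $\pi_u$), and for finite nonempty $\Lambda\subseteq\tilde S$ let $f_\Lambda=\prod_{u\in\Lambda}f_u$. *)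

From Stdlib Require Import List.
Import ListNotations.

(* Partial maps on Omega as relations: [r x y] means r maps x to y. *)
Definition prel (Omega : Type) := Omega -> Omega -> Prop.

Definition is_pbij {Omega : Type} (r : prel Omega) : Prop :=
  (forall x y z, r x y -> r x z -> y = z) /\
  (forall x y z, r x z -> r y z -> x = y).

(* Composition [pcomp f g] = f o g (apply g first, then f). *)
Definition pcomp {Omega : Type} (f g : prel Omega) : prel Omega :=
  fun x z => exists y, g x y /\ f y z.

Definition pinv {Omega : Type} (f : prel Omega) : prel Omega :=
  fun x y => f y x.

Definition pid (Omega : Type) : prel Omega := fun x y => x = y.

Definition pempty (Omega : Type) : prel Omega := fun _ _ => False.

Definition prange {Omega : Type} (f : prel Omega) : Omega -> Prop :=
  fun y => exists x, f x y.

Definition is_semigroup_with_zero {S : Type} (mul : S -> S -> S) (z : S) : Prop :=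
  (forall a b c, mul a (mul b c) = mul (mul a b) c) /\
  (forall a, mul z a = z) /\ (forall a, mul a z = z).

Definition zero_left_cancellative {S : Type} (mul : S -> S -> S) (z : S) : Prop :=
  forall s t r, mul s t = mul s r -> mul s t <> z -> t = r.

(* s | t iff t in s S~, S~ = S ∪ {1}. *)
Definition sdivides {S : Type} (mul : S -> S -> S) (s t : S) : Prop :=
  t = s \/ exists x, t = mul s x.

Definition is_lcm {S : Type} (mul : S -> S -> S) (s t r : S) : Prop :=
  (forall x, ((exists a, x = mul s a) /\ (exists b, x = mul t b))
             <-> exists c, x = mul r c) /\
  sdivides mul s r /\ sdivides mul t r.

Definition admits_lcm {S : Type} (mul : S -> S -> S) : Prop :=
  forall s t, exists r, is_lcm mul s t r.

Definition is_representation {S Omega : Type} (mul : S -> S -> S) (z : S)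
  (pi : S -> prel Omega) : Prop :=
  (forall s, is_pbij (pi s)) /\
  pi z = pempty Omega /\
  (forall s t, pcomp (pi s) (pi t) = pi (mul s t)).

Definition respects_lcm {S Omega : Type} (mul : S -> S -> S)
  (pi : S -> prel Omega) : Prop :=
  forall s t r, is_lcm mul s t r ->
    forall y, prange (pi r) y <-> (prange (pi s) y /\ prange (pi t) y).

(* Extension to S~ = option S, with None playing the role of 1. *)
Definition pit {S Omega : Type} (pi : S -> prel Omega) (u : option S) : prel Omega :=
  match u with Some s => pi s | None => pid Omega end.

Definition fu {S Omega : Type} (pi : S -> prel Omega) (u : option S) : prel Omega :=
  pcomp (pinv (pit pi u)) (pit pi u).

Definition fLam {S Omega : Type} (pi : S -> prel Omega) (L : list (option S)) : prel Omega :=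
  fold_right (fun u acc => pcomp (fu pi u) acc) (pid Omega) L.

Inductive gen_inv_sub {S Omega : Type} (pi : S -> prel Omega) : prel Omega -> Prop :=
  | gen_base : forall s, gen_inv_sub pi (pi s)
  | gen_comp : forall f g, gen_inv_sub pi f -> gen_inv_sub pi g ->
                 gen_inv_sub pi (pcomp f g)
  | gen_inv : forall f, gen_inv_sub pi f -> gen_inv_sub pi (pinv f).

(* Write an element of I(Ω) in normal form π_u f_Λ π_v^{-1}: it sends π_v y to
   π_u y for every y in the common domain of the π_l, l ∈ Λ. Normal forms are
   closed under inversion (swap u and v) and under composition: in
   π_u f_Λ π_v^{-1} π_w f_M π_k^{-1} pick a least common multiple va = wb of v
   and w; since E_{va} = E_v ∩ E_w, the product is
   π_{ua} f_{Λa ∪ {va} ∪ Mb} π_{kb}^{-1}. Conversely a normal form is a product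
   of generators, because f_Λ = f_Λ f_s = f_Λ π_s^{-1} π_s whenever s ∈ Λ. *)

From Stdlib Require Import List FunctionalExtensionality PropExtensionality.
Import ListNotations.

Lemma prel_ext {Omega : Type} (f g : prel Omega) :
  (forall x y, f x y <-> g x y) -> f = g.
Proof.
  intro H. apply functional_extensionality; intro x.
  apply functional_extensionality; intro y.
  apply propositional_extensionality, H.
Qed.

Lemma pcomp_pid_l {Omega : Type} (f : prel Omega) : pcomp (pid Omega) f = f.
Proof.
  apply prel_ext; intros x y; unfold pcomp, pid; split.
  - intros [m [H ->]]; exact H.
  - intro H; exists y; auto.
Qed.

Lemma pcomp_pid_r {Omega : Type} (f : prel Omega) : pcomp f (pid Omega) = f.
Proof.
  apply prel_ext; intros x y; unfold pcomp, pid; split.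
  - intros [m [-> H]]; exact H.
  - intro H; exists x; auto.
Qed.

Lemma pcomp_assoc {Omega : Type} (f g h : prel Omega) :
  pcomp f (pcomp g h) = pcomp (pcomp f g) h.
Proof.
  apply prel_ext; intros x y; unfold pcomp; split.
  - intros (m & (n & Hh & Hg) & Hf); eauto.
  - intros (n & Hh & m & Hg & Hf); eauto.
Qed.

Lemma pinv_pid {Omega : Type} : pinv (pid Omega) = pid Omega.
Proof. apply prel_ext; intros x y; unfold pinv, pid; split; auto. Qed.

Definition tmul {S : Type} (mul : S -> S -> S) (p q : option S) : option S :=
  match p, q with
  | Some s, Some t => Some (mul s t)
  | None, _ => q
  | _, None => p
  end.

Lemma tmul_Some_l {S : Type} (mul : S -> S -> S) (s : S) (a : option S) :
  exists t, tmul mul (Some s) a = Some t.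
Proof. destruct a as [t|]; eexists; reflexivity. Qed.

Lemma tilde_lcm {S Omega : Type} (mul : S -> S -> S) (pi : S -> prel Omega) :
  admits_lcm mul -> respects_lcm mul pi ->
  forall v w : option S, exists a b,
    tmul mul w b = tmul mul v a /\
    forall y, prange (pit pi v) y -> prange (pit pi w) y ->
              prange (pit pi (tmul mul v a)) y.
Proof.
  intros Hlcm Hresp [s|] [t|].
  - destruct (Hlcm s t) as [r Hr].
    pose proof Hr as (_ & Hsr & Htr).
    assert (Ha : exists a, tmul mul (Some s) a = Some r).
    { destruct Hsr as [->|[x ->]]; [exists None | exists (Some x)]; reflexivity. }
    assert (Hb : exists b, tmul mul (Some t) b = Some r).
    { destruct Htr as [->|[x ->]]; [exists None | exists (Some x)]; reflexivity. }
    destruct Ha as [a Ha], Hb as [b Hb].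
    exists a, b; rewrite Ha, Hb; split; [reflexivity|].
    intros y Hs Ht; apply (Hresp _ _ _ Hr); auto.
  - exists None, (Some s); split; [reflexivity | auto].
  - exists (Some t), None; split; [reflexivity | auto].
  - exists None, None; split; [reflexivity | auto].
Qed.

Section Representation.

Variables (S Omega : Type) (mul : S -> S -> S) (pi : S -> prel Omega).
Hypothesis pi_pbij : forall s, is_pbij (pi s).
Hypothesis pi_mul : forall s t, pcomp (pi s) (pi t) = pi (mul s t).

Lemma pit_pbij (u : option S) : is_pbij (pit pi u).
Proof.
  destruct u as [s|]; [apply pi_pbij|].
  unfold pid; split; intros; congruence.
Qed.

Lemma pit_functional u x y y' : pit pi u x y -> pit pi u x y' -> y = y'.
Proof. apply (proj1 (pit_pbij u)). Qed.

Lemma pit_injective u x x' y : pit pi u x y -> pit pi u x' y -> x = x'.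
Proof. apply (proj2 (pit_pbij u)). Qed.

Lemma pit_tmul p q : pit pi (tmul mul p q) = pcomp (pit pi p) (pit pi q).
Proof.
  destruct p as [s|], q as [t|]; simpl;
    rewrite ?pcomp_pid_l, ?pcomp_pid_r; auto.
Qed.

Lemma pit_tmul_at p a t q w :
  pit pi a t q -> (pit pi (tmul mul p a) t w <-> pit pi p q w).
Proof.
  intro Ha; rewrite pit_tmul; split.
  - intros [m [Ha' Hp]]; rewrite (pit_functional _ _ _ _ Ha' Ha) in Hp; exact Hp.
  - intro Hp; exists q; auto.
Qed.

Definition dom_all (L : list (option S)) (y : Omega) : Prop :=
  forall l, In l L -> exists w, pit pi l y w.

Lemma dom_all_app_cons L l M y :
  dom_all (L ++ l :: M) y <->
  dom_all L y /\ (exists w, pit pi l y w) /\ dom_all M y.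
Proof.
  unfold dom_all; split.
  - intro H; repeat split; intros; apply H; rewrite in_app_iff; simpl; auto.
  - intros (HL & Hl & HM) l' Hl'.
    rewrite in_app_iff in Hl'; simpl in Hl'.
    destruct Hl' as [H|[<-|H]]; auto.
Qed.

Lemma dom_all_map_tmul L a t q :
  pit pi a t q ->
  (dom_all (map (fun l => tmul mul l a) L) t <-> dom_all L q).
Proof.
  intro Ha; unfold dom_all; split.
  - intros H l Hl.
    destruct (H _ (in_map (fun l => tmul mul l a) _ _ Hl)) as [w Hw].
    exists w; apply (pit_tmul_at _ _ _ _ _ Ha); exact Hw.
  - intros H l' Hl'.
    apply in_map_iff in Hl' as (l & <- & Hl).
    destruct (H l Hl) as [w Hw].
    exists w; apply (pit_tmul_at _ _ _ _ _ Ha); exact Hw.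
Qed.

Lemma fu_spec u x y : fu pi u x y <-> x = y /\ exists w, pit pi u x w.
Proof.
  unfold fu, pcomp, pinv; split.
  - intros [w [Hxw Hyw]]; split; [exact (pit_injective _ _ _ _ Hxw Hyw) | eauto].
  - intros [-> [w Hw]]; exists w; auto.
Qed.

Lemma fLam_spec L x y : fLam pi L x y <-> x = y /\ dom_all L x.
Proof.
  revert x y; induction L as [|l L IH]; intros x y; simpl.
  - unfold pid, dom_all; simpl; intuition.
  - unfold pcomp at 1; split.
    + intros [m [HL Hl]].
      apply IH in HL as [-> HL]; apply fu_spec in Hl as [-> Hl].
      split; [reflexivity|]; intros l' [<-|Hl']; auto.
    + intros [-> HD]; exists y; split.
      * apply IH; split; [reflexivity|]; intros l' Hl'; apply HD; simpl; auto.
      * apply fu_spec; split; [reflexivity|]; apply HD; simpl; auto.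
Qed.

(* [nf_rel L u v] is the relation π_u f_L π_v^{-1}. *)
Definition nf_rel (L : list (option S)) (u v : option S) : prel Omega :=
  fun x z => exists y, pit pi v y x /\ dom_all L y /\ pit pi u y z.

Lemma nf_relE L u v :
  pcomp (pit pi u) (pcomp (fLam pi L) (pinv (pit pi v))) = nf_rel L u v.
Proof.
  apply prel_ext; intros x z; unfold pcomp, pinv, nf_rel; split.
  - intros (y & (y' & Hv & HL) & Hu); apply fLam_spec in HL as [-> HL]; eauto.
  - intros (y & Hv & HL & Hu); exists y; split; auto.
    exists y; split; auto; apply fLam_spec; auto.
Qed.

Lemma pi_nf_rel s : pi s = nf_rel [Some s; None] (Some s) None.
Proof.
  apply prel_ext; intros x z; unfold nf_rel, dom_all; simpl; unfold pid; split.
  - intro H; exists x; repeat split; auto.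
    intros l [<-|[<-|[]]]; simpl; unfold pid; eauto.
  - intros (y & -> & _ & H); exact H.
Qed.

Lemma pinv_nf_rel L u v : pinv (nf_rel L u v) = nf_rel L v u.
Proof.
  apply prel_ext; intros x z; unfold pinv, nf_rel; split;
    intros (y & Hv & HL & Hu); eauto.
Qed.

Lemma pcomp_nf_rel L u v M w k a b :
  tmul mul w b = tmul mul v a ->
  (forall y, prange (pit pi v) y -> prange (pit pi w) y ->
             prange (pit pi (tmul mul v a)) y) ->
  pcomp (nf_rel L u v) (nf_rel M w k) =
  nf_rel (map (fun l => tmul mul l a) L ++ tmul mul v a ::
          map (fun m => tmul mul m b) M)
         (tmul mul u a) (tmul mul k b).
Proof.
  intros Hab Hrange; apply prel_ext; intros x z; unfold pcomp, nf_rel; split.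
  - intros (y & (p & Hkp & HM & Hwp) & (q & Hvq & HL & Huq)).
    destruct (Hrange y (ex_intro _ q Hvq) (ex_intro _ p Hwp)) as [t Hvat].
    assert (Hta : pit pi a t q).
    { pose proof Hvat as Hvat'; rewrite pit_tmul in Hvat'.
      destruct Hvat' as [m [Ham Hvm]].
      rewrite (pit_injective _ _ _ _ Hvm Hvq) in Ham; exact Ham. }
    assert (Htb : pit pi b t p).
    { pose proof Hvat as Hwbt; rewrite <- Hab, pit_tmul in Hwbt.
      destruct Hwbt as [m [Hbm Hwm]].
      rewrite (pit_injective _ _ _ _ Hwm Hwp) in Hbm; exact Hbm. }
    exists t; split; [|split].
    + apply (pit_tmul_at _ _ _ _ _ Htb); exact Hkp.
    + rewrite dom_all_app_cons, (dom_all_map_tmul _ _ _ _ Hta),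
        (dom_all_map_tmul _ _ _ _ Htb); eauto.
    + apply (pit_tmul_at _ _ _ _ _ Hta); exact Huq.
  - intros (t & Hkb & Hdom & Hua).
    rewrite pit_tmul in Hkb, Hua.
    destruct Hkb as [p [Htb Hpx]], Hua as [q [Hta Hqz]].
    rewrite dom_all_app_cons, (dom_all_map_tmul _ _ _ _ Hta),
      (dom_all_map_tmul _ _ _ _ Htb) in Hdom.
    destruct Hdom as (HL & [y Hy] & HM).
    exists y; split.
    + exists p; repeat split; auto.
      rewrite <- Hab in Hy; apply (pit_tmul_at _ _ _ _ _ Htb); exact Hy.
    + exists q; repeat split; auto.
      apply (pit_tmul_at _ _ _ _ _ Hta); exact Hy.
Qed.

Lemma fLam_absorb L u : In u L -> pcomp (fLam pi L) (fu pi u) = fLam pi L.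
Proof.
  intro Hu; apply prel_ext; intros x y; unfold pcomp at 1; split.
  - intros [m [Hxm Hmy]]; apply fu_spec in Hxm as [-> _]; exact Hmy.
  - intro Hxy; exists x; split; [|exact Hxy].
    apply fLam_spec in Hxy as [_ HD]; apply fu_spec; auto.
Qed.

Lemma fLam_pcomp_gen L F :
  gen_inv_sub pi F -> gen_inv_sub pi (pcomp (fLam pi L) F).
Proof.
  intro HF; induction L as [|[s|] L IH]; simpl.
  - rewrite pcomp_pid_l; exact HF.
  - rewrite <- pcomp_assoc; apply gen_comp; [|exact IH].
    unfold fu; simpl; apply gen_comp; [apply gen_inv|]; apply gen_base.
  - unfold fu; simpl; rewrite pinv_pid, !pcomp_pid_l; exact IH.
Qed.

Lemma fLam_gen L : (exists s, In (Some s) L) -> gen_inv_sub pi (fLam pi L).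
Proof.
  intros [s Hs]; rewrite <- (fLam_absorb _ _ Hs).
  apply fLam_pcomp_gen; unfold fu; simpl.
  apply gen_comp; [apply gen_inv|]; apply gen_base.
Qed.

Lemma pit_pcomp_gen u F :
  gen_inv_sub pi F -> gen_inv_sub pi (pcomp (pit pi u) F).
Proof.
  intro HF; destruct u as [s|]; simpl.
  - apply gen_comp; [apply gen_base | exact HF].
  - rewrite pcomp_pid_l; exact HF.
Qed.

Lemma pcomp_pinv_pit_gen v F :
  gen_inv_sub pi F -> gen_inv_sub pi (pcomp F (pinv (pit pi v))).
Proof.
  intro HF; destruct v as [t|]; simpl.
  - apply gen_comp; [exact HF | apply gen_inv, gen_base].
  - rewrite pinv_pid, pcomp_pid_r; exact HF.
Qed.

Definition normal_form (g : prel Omega) : Prop :=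
  exists L u v, (exists s, In (Some s) L) /\ In u L /\ In v L /\
                g = nf_rel L u v.

Lemma normal_form_pi s : normal_form (pi s).
Proof.
  exists [Some s; None], (Some s), None; simpl.
  repeat split; eauto using pi_nf_rel.
Qed.

Lemma normal_form_pinv g : normal_form g -> normal_form (pinv g).
Proof.
  intros (L & u & v & HL & Hu & Hv & ->).
  exists L, v, u; repeat split; auto using pinv_nf_rel.
Qed.

Lemma normal_form_pcomp f g :
  admits_lcm mul -> respects_lcm mul pi ->
  normal_form f -> normal_form g -> normal_form (pcomp f g).
Proof.
  intros Hlcm Hresp (L & u & v & [s Hs] & Hu & Hv & ->)
    (M & w & k & _ & Hw & Hk & ->).
  destruct (tilde_lcm mul pi Hlcm Hresp v w) as (a & b & Hab & Hrange).
  destruct (tmul_Some_l mul s a) as [sa Hsa].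
  eexists _, _, _; split; [|split; [|split]];
    [| | | exact (pcomp_nf_rel L u v M w k a b Hab Hrange)].
  - exists sa; rewrite <- Hsa; apply in_or_app; left.
    exact (in_map (fun l => tmul mul l a) _ _ Hs).
  - apply in_or_app; left; exact (in_map (fun l => tmul mul l a) _ _ Hu).
  - apply in_or_app; right; right.
    exact (in_map (fun m => tmul mul m b) _ _ Hk).
Qed.

Lemma gen_normal_form g :
  admits_lcm mul -> respects_lcm mul pi ->
  gen_inv_sub pi g -> normal_form g.
Proof.
  intros Hlcm Hresp Hg.
  induction Hg; auto using normal_form_pi, normal_form_pinv, normal_form_pcomp.
Qed.

End Representation.

Theorem theorem7p11 (S Omega : Type) (mul : S -> S -> S) (z : S)
  (pi : S -> prel Omega)
  (HS : is_semigroup_with_zero mul z)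
  (Hcanc : zero_left_cancellative mul z)
  (Hlcm : admits_lcm mul)
  (Hrep : is_representation mul z pi)
  (Hresp : respects_lcm mul pi) :
  forall g : prel Omega,
    gen_inv_sub pi g <->
    exists (L : list (option S)) (u v : option S),
      (exists s, In (Some s) L) /\ In u L /\ In v L /\
      g = pcomp (pit pi u) (pcomp (fLam pi L) (pinv (pit pi v))).
Proof.
  destruct Hrep as (Hpbij & _ & Hmul).
  intro g; split.
  - intro Hg.
    destruct (gen_normal_form _ _ _ _ Hpbij Hmul _ Hlcm Hresp Hg)
      as (L & u & v & HL & Hu & Hv & ->).
    exists L, u, v; repeat split; auto.
    symmetry; apply nf_relE, Hpbij.
  - intros (L & u & v & HL & _ & _ & ->).
    apply pit_pcomp_gen, pcomp_pinv_pit_gen; eapply fLam_gen; eauto.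
Qed.
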